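(* Let $\phi_1,\dots,\phi_m:\mathbb{R}^n\to\mathbb{R}$ be softmax-type functions, i.e. for each $i\in[m]$ there are $j_i\in[n]$ and $\xi_{i1},\dots,\xi_{in}\ge0$ with $\sum_k\xi_{ik}=1$ such that $\phi_i(z)=\frac{\exp(z_{j_i})}{\sum_{k=1}^n\xi_{ik}\exp(z_k)}$. Let $\sum_{\gamma\in\mathbb{Z}_{\ge0}^n}a_\gamma z^\gamma$ be the Taylor series at $0$ of $\prod_{i=1}^m\phi_i$. Then for every integer $k\ge0$, $$\sum_{\gamma\in\mathbb{Z}_{\ge0}^n:\,|\gamma|=k}|a_\gamma|\le(e^3m)^k.$$
   Context: $z^\gamma=z_1^{\gamma_1}\cdots z_n^{\gamma_n}$ and $|\gamma|=\gamma_1+\dots+\gamma_n$. *)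

From HB Require Import structures.
From mathcomp Require Import all_boot all_order all_algebra.
From mathcomp Require Import all_classical all_reals all_analysis.
Set Implicit Arguments. Unset Strict Implicit. Unset Printing Implicit Defensive.
Import Order.TTheory GRing.Theory Num.Theory.
Import numFieldNormedType.Exports.
Local Open Scope ring_scope.

(* Points of R^n are row vectors 'rV[R]_n; z_j is written z ord0 j. *)

Definition basis_vec (R : realType) (n : nat) (j : 'I_n) : 'rV[R]_n :=
  \row_k (k == j)%:R.

Definition partial (R : realType) (n : nat) (j : 'I_n)
  (f : 'rV[R]_n -> R) : 'rV[R]_n -> R :=
  fun z => 'D_(basis_vec R j) f z.

Definition dpartial (R : realType) (n : nat) (gamma : 'I_n -> nat)
  (f : 'rV[R]_n -> R) : 'rV[R]_n -> R :=
  foldr (fun j g => iter (gamma j) (partial j) g) f (enum 'I_n).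

Definition taylor_coef (R : realType) (n : nat) (f : 'rV[R]_n -> R)
  (gamma : 'I_n -> nat) : R :=
  dpartial gamma f 0 / (\prod_(j < n) (gamma j)`!)%:R.

Definition softmax_type (R : realType) (n : nat) (j : 'I_n) (xi : 'I_n -> R)
  (z : 'rV[R]_n) : R :=
  expR (z ord0 j) / \sum_(k < n) xi k * expR (z ord0 k).

From HB Require Import structures.
From mathcomp Require Import all_boot all_order all_algebra.
From mathcomp Require Import all_classical all_reals all_analysis.
From mathcomp Require Import ring lra zify.
Set Implicit Arguments. Unset Strict Implicit. Unset Printing Implicit Defensive.
Import Order.TTheory GRing.Theory Num.Theory.
Import numFieldNormedType.Exports.
Local Open Scope ring_scope.

(* Write S_i(z) = sum_k xi_ik exp(z_k).  The product prod_i exp(z_(J i)) / S_i(z)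
   belongs to the family of functions G_(a,b)(z) = exp(<a, z>) / prod_i S_i(z)^(b_i)
   indexed by states (a, b) in N^n x N^m, and this family is closed under partial
   derivatives:
       d_l G_(a,b) = a_l G_(a,b) - sum_i b_i xi_il G_(a + e_l, b + e_i).
   Hence d_l acts on the coefficient functions h : state -> R of the family through
   the formal operator [Dform (-1) l], and D^gamma G_s(0) is obtained by applying
   these operators to the constant function 1, since G_s(0) = 1.  Replacing the sign
   -1 by +1 bounds the absolute values.  The operators [Dform sg l] commute, so the
   normalised sums Q_k = sum_(|gamma| = k) D^gamma / gamma! satisfy the multinomial
   recursion (k+1) Q_(k+1) = sum_l Dform l Q_k, which yields, for a state whose
   two exponent vectors have total size at most a, the bound
       Q_k <= prod_(d < k) 2(a + d) / k!  <=  (2a)^k.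
   The theorem is the case a = m. *)

Definition incr_at {T : eqType} (f : T -> nat) (t : T) : T -> nat :=
  fun x => (f x + (x == t))%N.

Lemma sum_incr_at (T : finType) (f : T -> nat) (t : T) :
  (\sum_(x : T) incr_at f t x = \sum_(x : T) f x + 1)%N.
Proof.
rewrite /incr_at big_split /=; congr (_ + _)%N.
by rewrite (bigD1 t) //= eqxx big1 ?addn0 // => x /negbTE ->.
Qed.

Lemma sum_delta_l (V : pzSemiRingType) (T : finType) (F : T -> V) (t : T) :
  \sum_(x : T) (x == t)%:R * F x = F t.
Proof. by rewrite (bigD1 t) //= eqxx mul1r big1 ?addr0 // => x /negbTE ->; rewrite mul0r. Qed.

Lemma sum_delta_r (V : pzSemiRingType) (T : finType) (F : T -> V) (t : T) :
  \sum_(x : T) F x * (x == t)%:R = F t.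
Proof. by rewrite (bigD1 t) //= eqxx mulr1 big1 ?addr0 // => x /negbTE ->; rewrite mulr0. Qed.

Section FormalDerivative.
Variables (R : realType) (n m : nat) (xi : 'I_m -> 'I_n -> R).
Hypothesis xi_ge0 : forall i k, 0 <= xi i k.

(* A state (a, b) indexes the function exp(<a, z>) / prod_i S_i(z)^(b_i). *)
Definition state := (('I_n -> nat) * ('I_m -> nat))%type.

(* The state reached by differentiating along z_l the i-th denominator. *)
Definition next (s : state) (l : 'I_n) (i : 'I_m) : state :=
  (incr_at s.1 l, incr_at s.2 i).

(* Formal partial derivative along z_l acting on coefficient functions; the sign
   sg is -1 for the true derivative and +1 for the majorant. *)
Definition Dform (sg : R) (l : 'I_n) (h : state -> R) : state -> R :=
  fun s => (s.1 l)%:R * h s +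
    sg * \sum_(i < m) (s.2 i)%:R * xi i l * h (next s l i).

Definition Dmulti (sg : R) (g : 'I_n -> nat) (L : seq 'I_n) (h : state -> R) :
    state -> R :=
  foldr (fun j acc => iter (g j) (Dform sg j) acc) h L.

Lemma next_comm s a b i i' :
  next (next s a i) b i' = next (next s b i') a i.
Proof. by rewrite /next /=; congr (_, _); apply/funext => x; rewrite /incr_at; lia. Qed.

(* The part of Dform a (Dform b h) where both operators act on denominators. *)
Definition cross_term sg (a b : 'I_n) (h : state -> R) (s : state) : R :=
  \sum_(i < m) (s.2 i)%:R * xi i a *
    (sg * \sum_(i' < m) (incr_at s.2 i i')%:R * xi i' b * h (next (next s a i) b i')).

Lemma Dform_twice sg a b h s : Dform sg a (Dform sg b h) s =
  (s.1 a)%:R * ((s.1 b)%:R * h s)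
  + (s.1 a)%:R * (sg * \sum_(i < m) (s.2 i)%:R * xi i b * h (next s b i))
  + sg * ((incr_at s.1 a b)%:R * \sum_(i < m) (s.2 i)%:R * xi i a * h (next s a i))
  + sg * cross_term sg a b h s.
Proof.
rewrite /Dform /cross_term /= mulrDr -!addrA; congr (_ + (_ + _)).
rewrite -mulrDr; congr (_ * _).
rewrite mulr_sumr -big_split /=; apply: eq_bigr => i _.
by rewrite mulrDr; congr (_ + _); ring.
Qed.

(* Symmetric because b_i (b_i' + [i' = i]) is symmetric in (i, i'). *)
Lemma cross_term_sym sg a b h s : cross_term sg a b h s = cross_term sg b a h s.
Proof.
rewrite /cross_term.
under eq_bigr do rewrite !mulr_sumr.
under [RHS]eq_bigr do rewrite !mulr_sumr.
rewrite [RHS]exchange_big /=; apply: eq_bigr => i _; apply: eq_bigr => i' _.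
rewrite next_comm /incr_at; case: (eqVneq i' i) => [->|ne]; first by ring.
by rewrite /= !addn0; ring.
Qed.

Lemma Dform_comm sg a b h : Dform sg a (Dform sg b h) = Dform sg b (Dform sg a h).
Proof.
apply/funext => s; case: (eqVneq a b) => [->//|ne].
rewrite !Dform_twice cross_term_sym /incr_at (negbTE ne) eq_sym (negbTE ne) !addn0.
ring.
Qed.

Lemma iter_Dform_comm sg a b r h :
  iter r (Dform sg a) (Dform sg b h) = Dform sg b (iter r (Dform sg a) h).
Proof. by elim: r => //= r ->; rewrite Dform_comm. Qed.

Lemma Dform_sum sg l (I : finType) (P : pred I) (F : I -> state -> R) s :
  Dform sg l (fun s' => \sum_(x | P x) F x s') s = \sum_(x | P x) Dform sg l (F x) s.
Proof.
rewrite /Dform mulr_sumr big_split /=; congr (_ + _).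
rewrite -[RHS]mulr_sumr exchange_big /=; congr (_ * _).
by apply: eq_bigr => i _; rewrite mulr_sumr.
Qed.

Lemma Dform_mulr sg l (F : state -> R) c s :
  Dform sg l (fun s' => F s' * c) s = Dform sg l F s * c.
Proof.
rewrite /Dform mulrDl -mulrA; congr (_ + _).
rewrite -mulrA mulr_suml; congr (_ * _); apply: eq_bigr => i _; ring.
Qed.

Lemma Dmulti_eq_in sg (g g' : 'I_n -> nat) L h : {in L, g =1 g'} ->
  Dmulti sg g L h = Dmulti sg g' L h.
Proof.
elim: L => //= j L IH hg; rewrite IH ?hg ?mem_head //.
by move=> x xL; apply: hg; rewrite in_cons xL orbT.
Qed.

Lemma Dmulti_shift sg (g g' : 'I_n -> nat) l L h :
  g =1 incr_at g' l -> uniq L -> l \in L ->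
  Dmulti sg g L h = Dform sg l (Dmulti sg g' L h).
Proof.
move=> hg; elim: L => //= j L IH /andP [jL uL].
rewrite in_cons; case: (eqVneq l j) => [elj _ | ne /= lL]; last first.
  by rewrite IH // hg /incr_at eq_sym (negbTE ne) addn0 iter_Dform_comm.
subst j; have -> : Dmulti sg g L h = Dmulti sg g' L h.
  apply: Dmulti_eq_in => x xL; rewrite hg /incr_at.
  by case: (eqVneq x l) => [exl|]; [move: jL; rewrite -exl xL | rewrite addn0].
by rewrite hg /incr_at eqxx addn1.
Qed.

Lemma Dmulti_zero sg L h : Dmulti sg (fun _ => 0%N) L h = h.
Proof. by elim: L. Qed.

Lemma Dform_norm_le l (h h' : state -> R) : (forall s, `|h s| <= h' s) ->
  forall s, `|Dform (-1) l h s| <= Dform 1 l h' s.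
Proof.
move=> hh s; rewrite /Dform mul1r mulN1r.
apply: (le_trans (ler_normD _ _)); apply: lerD.
  by rewrite normrM ger0_norm // ler_wpM2l.
rewrite normrN; apply: (le_trans (ler_norm_sum _ _ _)); apply: ler_sum => i _.
by rewrite normrM ger0_norm ?ler_wpM2l // mulr_ge0.
Qed.

Lemma Dmulti_norm_le g L (h h' : state -> R) : (forall s, `|h s| <= h' s) ->
  forall s, `|Dmulti (-1) g L h s| <= Dmulti 1 g L h' s.
Proof.
move=> hh; elim: L => //= j L IH.
by elim: (g j) => //= r IHr; apply: Dform_norm_le.
Qed.

End FormalDerivative.

Section Multinomial.
Variables (R : realType) (n m : nat) (xi : 'I_m -> 'I_n -> R).

Local Notation state := (state n m).
Local Notation Dform := (@Dform R n m xi).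
Local Notation Dmulti := (@Dmulti R n m xi).

Definition Qsum sg k (h : state -> R) (s : state) : R :=
  \sum_(gamma : {ffun 'I_n -> 'I_k.+1} | (\sum_(j < n) (gamma j : nat) == k)%N)
    Dmulti sg (fun j => gamma j : nat) (enum 'I_n) h s /
      (\prod_(j < n) (gamma j)`!)%:R.

Lemma Qsum0 sg h s : Qsum sg 0 h s = h s.
Proof.
pose g0 : {ffun 'I_n -> 'I_1} := [ffun => ord0].
rewrite /Qsum (big_pred1 g0); last first.
  move=> g /=; have -> : g = g0 by apply/ffunP => j; rewrite !ord1.
  by rewrite eqxx big1 // => j _; rewrite ffunE.
rewrite (_ : (fun j => g0 j : nat) = (fun _ => 0%N)); last first.
  by apply/funext => j; rewrite ffunE.
by rewrite Dmulti_zero big1 ?divr1 // => j _; rewrite ffunE.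
Qed.

Definition ffun_incr {k} (l : 'I_n) (g : {ffun 'I_n -> 'I_k.+1}) :
    {ffun 'I_n -> 'I_k.+2} :=
  [ffun x => inord (incr_at (fun j => g j : nat) l x)].
Definition ffun_decr {k} (l : 'I_n) (g : {ffun 'I_n -> 'I_k.+2}) :
    {ffun 'I_n -> 'I_k.+1} :=
  [ffun x => inord (g x - (x == l))].

Lemma ffun_incrE k l (g : {ffun 'I_n -> 'I_k.+1}) x :
  (ffun_incr l g x : nat) = incr_at (fun j => g j : nat) l x.
Proof.
by rewrite ffunE inordK // /incr_at; have := ltn_ord (g x); case: (x == l) => /=; lia.
Qed.

Lemma ffun_decrK k l (g : {ffun 'I_n -> 'I_k.+1}) : ffun_decr l (ffun_incr l g) = g.
Proof.
by apply/ffunP => x; apply/val_inj; rewrite ffunE ffun_incrE /incr_at addnK /= inordK.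
Qed.

Lemma ffun_incrK k l (g : {ffun 'I_n -> 'I_k.+2}) :
  (\sum_(j < n) (g j : nat) == k.+1)%N -> (0 < g l)%N ->
  ffun_incr l (ffun_decr l g) = g.
Proof.
move=> /eqP hs hl; apply/ffunP => x; apply/val_inj => /=.
rewrite ffun_incrE /incr_at ffunE inordK.
  by case: (eqVneq x l) => [->|] /=; [rewrite subn1 addn1 prednK|rewrite subn0 addn0].
case: (eqVneq x l) => [->|ne] /=; first by have := ltn_ord (g l); lia.
have : (g x + g l <= \sum_(j < n) g j)%N.
  rewrite (bigD1 x) //= leq_add2l (bigD1 l) /=; last by rewrite eq_sym.
  exact: leq_addr.
by rewrite hs; lia.
Qed.

Lemma fact_ffun_incr k l (g : {ffun 'I_n -> 'I_k.+1}) :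
  (\prod_(x < n) (ffun_incr l g x)`! = (g l).+1 * \prod_(x < n) (g x)`!)%N.
Proof.
rewrite (bigD1 l) //= [in RHS](bigD1 l) //= ffun_incrE /incr_at eqxx addn1 factS.
rewrite -!mulnA; congr (_ * (_ * _))%N.
by apply: eq_bigr => x /negbTE hx; rewrite ffun_incrE /incr_at hx addn0.
Qed.

(* Axis-l part of the recursion: gamma_l / gamma! = 1 / (gamma - e_l)!. *)
Lemma Qsum_rec_axis sg k h s l :
  \sum_(gamma : {ffun 'I_n -> 'I_k.+2} | (\sum_(j < n) (gamma j : nat) == k.+1)%N)
    (gamma l : nat)%:R * (Dmulti sg (fun j => gamma j : nat) (enum 'I_n) h s /
      (\prod_(j < n) (gamma j)`!)%:R) =
  \sum_(gamma : {ffun 'I_n -> 'I_k.+1} | (\sum_(j < n) (gamma j : nat) == k)%N)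
    Dform sg l (Dmulti sg (fun j => gamma j : nat) (enum 'I_n) h) s /
      (\prod_(j < n) (gamma j)`!)%:R.
Proof.
rewrite (bigID (fun g : {ffun 'I_n -> 'I_k.+2} => (0 < g l)%N)) /=.
rewrite [X in _ + X]big1 ?addr0; last first.
  by move=> g /andP [_]; rewrite lt0n negbK => /eqP ->; rewrite mul0r.
rewrite (reindex_onto (ffun_incr l) (ffun_decr l)); last first.
  by move=> g /andP [hs hl]; apply: ffun_incrK.
apply: eq_big => g.
  rewrite ffun_decrK eqxx andbT ffun_incrE /incr_at eqxx addn1 ltn0Sn andbT.
  by rewrite (eq_bigr _ (fun x _ => ffun_incrE l g x)) sum_incr_at addn1 eqSS.
move=> _; rewrite (@Dmulti_shift _ _ _ _ _ _ (fun j => g j : nat) l); last first.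
- exact: mem_enum.
- exact: enum_uniq.
- by move=> x; rewrite ffun_incrE.
rewrite fact_ffun_incr ffun_incrE /incr_at eqxx addn1 natrM.
have hfact : (\prod_(x < n) (g x)`!)%:R != 0 :> R.
  by rewrite pnatr_eq0 -lt0n prodn_gt0 // => x; exact: fact_gt0.
by field; rewrite hfact /= addrC natr1 pnatr_eq0.
Qed.

(* Multinomial recursion, using k+1 = sum_l gamma_l on multi-indices of size k+1. *)
Lemma Qsum_rec sg k h s :
  (k.+1)%:R * Qsum sg k.+1 h s = \sum_(l < n) Dform sg l (Qsum sg k h) s.
Proof.
rewrite /Qsum mulr_sumr.
under eq_bigr => g /eqP hg do rewrite -[in (k.+1)%:R]hg natr_sum mulr_suml.
rewrite exchange_big /=; apply: eq_bigr => l _.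
rewrite Dform_sum; under [RHS]eq_bigr do rewrite Dform_mulr.
exact: Qsum_rec_axis.
Qed.

End Multinomial.

Section GrowthBound.
Variables (R : realType) (n m : nat) (xi : 'I_m -> 'I_n -> R).
Hypothesis xi_ge0 : forall i k, 0 <= xi i k.
Hypothesis xi_sum : forall i, \sum_(k < n) xi i k = 1.

Local Notation state := (state n m).
Local Notation Dform := (@Dform R n m xi).
Local Notation Qsum := (@Qsum R n m xi).

(* B(k, a) = prod_(d < k) 2(a + d) / k!, solution of B(k+1, a) = 2a B(k, a+1) / (k+1). *)
Definition growth_bound k (a : nat) : R :=
  (\prod_(d < k) (2 * (a + d)))%:R / (k`!)%:R.

Lemma growth_bound_ge0 k a : 0 <= growth_bound k a.
Proof. by rewrite /growth_bound divr_ge0. Qed.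

Lemma growth_bound_mono k a : growth_bound k a <= growth_bound k a.+1.
Proof.
rewrite /growth_bound ler_pM2r ?invr_gt0 ?ltr0n ?fact_gt0 // ler_nat.
by apply: leq_prod => d _; rewrite leq_mul2l addSn leqnSn orbT.
Qed.

Lemma growth_boundS k a :
  growth_bound k.+1 a = (2 * a)%:R * growth_bound k a.+1 / (k.+1)%:R.
Proof.
rewrite /growth_bound big_ord_recl /= addn0 factS.
have -> : (\prod_(i < k) (2 * (a + bump 0 i)) = \prod_(i < k) (2 * (a.+1 + i)))%N.
  by apply: eq_bigr => i _; rewrite /bump /= add1n addnS.
have hfact : (k`!)%:R != 0 :> R by rewrite pnatr_eq0 -lt0n fact_gt0.
by rewrite !natrM; field; rewrite hfact /= addrC natr1 pnatr_eq0.
Qed.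

(* prod_(d < k) (a + d) <= a^k k!, hence B(k, a) <= (2a)^k. *)
Lemma growth_bound_le_pow k a : growth_bound k a <= (2 * a)%:R ^+ k.
Proof.
rewrite /growth_bound ler_pdivrMr ?ltr0n ?fact_gt0 // -natrX -natrM ler_nat.
case: a => [|a].
  by case: k => [|k]; rewrite ?big_ord0 // big_ord_recl mul0n.
elim: k => [|k IH]; first by rewrite big_ord0.
rewrite big_ord_recr /= factS expnS.
have step : (2 * (a.+1 + k) <= 2 * a.+1 * k.+1)%N by nia.
apply: (leq_trans (leq_mul IH step)); lia.
Qed.

Lemma Qsum_le_growth_bound k : forall a (s : state),
  (\sum_(j < n) s.1 j <= a)%N -> (\sum_(i < m) s.2 i <= a)%N ->
  Qsum 1 k (fun _ => 1) s <= growth_bound k a.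
Proof.
elim: k => [|k IH] a s ha hb.
  by rewrite Qsum0 /growth_bound big_ord0 divr1.
have hk : 0 < (k.+1)%:R :> R by rewrite ltr0n.
rewrite -[Qsum _ _ _ _](mulKf (lt0r_neq0 hk)) Qsum_rec growth_boundS.
rewrite mulrC ler_pM2r ?invr_gt0 //.
set B := growth_bound k a.+1.
have hB : 0 <= B by apply: growth_bound_ge0.
have hQ : Qsum 1 k (fun _ => 1) s <= B.
  by apply: le_trans (growth_bound_mono _ _); apply: IH.
have hQnext l i : Qsum 1 k (fun _ => 1) (next s l i) <= B.
  by apply: IH; rewrite sum_incr_at addn1.
apply: (@le_trans _ _
  (\sum_(l < n) ((s.1 l)%:R * B + \sum_(i < m) (s.2 i)%:R * xi i l * B))).
  apply: ler_sum => l _; rewrite /Dform mul1r; apply: lerD.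
    by rewrite ler_wpM2l.
  by apply: ler_sum => i _; rewrite ler_wpM2l // mulr_ge0.
rewrite big_split /= -mulr_suml exchange_big /=.
have -> : \sum_(i < m) \sum_(l < n) (s.2 i)%:R * xi i l * B =
          (\sum_(i < m) s.2 i)%:R * B.
  rewrite natr_sum mulr_suml; apply: eq_bigr => i _.
  by rewrite -mulr_suml -mulr_sumr xi_sum mulr1.
rewrite -mulrDl -natr_sum -natrD ler_wpM2r // ler_nat.
by rewrite mul2n -addnn leq_add.
Qed.

End GrowthBound.

Section Directional.
Variables (R : realType) (n : nat).
Implicit Types (f : 'rV[R]_n -> R).

Lemma derive_along_line f x v :
  'D_v f x = 'D_(1:R) (fun h : R => f (h *: v + x)) 0.
Proof.
rewrite /derive; set g1 := fun h => h^-1 *: _; set g2 := fun h => h^-1 *: _.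
suff -> : g1 = g2 by [].
by rewrite funeqE /g1 /g2 => h /=; rewrite addr0 scale0r add0r [_%:A]mulr1.
Qed.

Lemma is_derive_along_line f x v df :
  is_derive x v f df <-> is_derive (0:R) (1:R) (fun h : R => f (h *: v + x)) df.
Proof.
split => -[d e]; constructor.
- by move/derivable1P: d.
- by rewrite -derive_along_line.
- by apply/derivable1P.
- by rewrite derive_along_line.
Qed.

Lemma is_derive_comp1 f (g : R -> R) x v a b :
  is_derive (f x) 1 g a -> is_derive x v f b -> is_derive x v (g \o f) (a * b).
Proof.
move=> hg /is_derive_along_line hf; apply/is_derive_along_line.
have e : (fun h : R => f (h *: v + x)) 0 = f x by rewrite /= scale0r add0r.
rewrite -e in hg; exact: is_derive1_comp hg hf.
Qed.

Lemma is_derive_coord x v j :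
  is_derive x v (fun z : 'rV[R]_n => z ord0 j) (v ord0 j).
Proof.
apply/is_derive_along_line.
have -> : (fun h : R => (h *: v + x) ord0 j) = (v ord0 j) \*: (@id R) + cst (x ord0 j).
  by rewrite funeqE => h /=; rewrite !mxE mulrC.
rewrite -[X in is_derive _ _ _ X]addr0 -[X in is_derive _ _ _ (X + _)]mulr1.
exact: is_deriveD (is_deriveZ _ _) _.
Qed.

Lemma basis_vecE (l j : 'I_n) : basis_vec R l ord0 j = (j == l)%:R.
Proof. by rewrite /basis_vec mxE. Qed.

Lemma is_derive_lincomb m (c : 'I_m -> R) (F : 'I_m -> 'rV[R]_n -> R) x v dF :
  (forall i, is_derive x v (F i) (dF i)) ->
  is_derive x v (fun z => \sum_(i < m) c i * F i z) (\sum_(i < m) c i * dF i).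
Proof.
move=> hF; have := is_derive_sum (fun i => is_deriveZ (c i) (hF i)).
by rewrite (_ : \sum_(i < m) c i *: F i = fun z => \sum_(i < m) c i * F i z) //;
  apply/funext => z; rewrite fct_sumE.
Qed.

End Directional.

Section Realization.
Variables (R : realType) (n m : nat) (xi : 'I_m -> 'I_n -> R).

Local Notation state := (state n m).
Local Notation Dform := (@Dform R n m xi).
Local Notation Dmulti := (@Dmulti R n m xi).

Definition lift (T : (state -> R) -> state -> R) (H : state -> 'rV[R]_n -> R) :
    state -> 'rV[R]_n -> R :=
  fun s z => T (fun s' => H s' z) s.

Definition realizes (H : state -> 'rV[R]_n -> R) :=
  forall s l z, is_derive z (basis_vec R l) (H s) (lift (Dform (-1) l) H s z).

(* Realizing families are closed under the operators they realize; this uses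
   that the operators Dform commute. *)
Lemma realizes_lift_Dform b H : realizes H -> realizes (lift (Dform (-1) b) H).
Proof.
move=> hH s l z.
have hsum : is_derive z (basis_vec R l)
   (fun z => \sum_(i < m) (s.2 i)%:R * xi i b * H (next s b i) z)
   (\sum_(i < m) (s.2 i)%:R * xi i b * lift (Dform (-1) l) H (next s b i) z).
  exact: is_derive_lincomb.
have := is_deriveD (is_deriveZ (s.1 b)%:R (hH s l z)) (is_deriveZ (-1) hsum).
move/is_derive_eq; apply.
by rewrite /lift (@Dform_comm R n m xi (-1) l b).
Qed.

Lemma partial_realized H s l : realizes H -> partial l (H s) = lift (Dform (-1) l) H s.
Proof. by move=> hH; apply/funext => z; case: (hH s l z). Qed.

Lemma realizes_lift_iter j r H : realizes H -> realizes (lift (iter r (Dform (-1) j)) H).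
Proof. by move=> hH; elim: r => //= r IH; apply: realizes_lift_Dform. Qed.

Lemma iter_partial_realized j r H s : realizes H ->
  iter r (partial j) (H s) = lift (iter r (Dform (-1) j)) H s.
Proof.
move=> hH; elim: r => //= r IH.
by rewrite IH partial_realized //; apply: realizes_lift_iter.
Qed.

Lemma realizes_lift_Dmulti g L H : realizes H -> realizes (lift (Dmulti (-1) g L) H).
Proof. by move=> hH; elim: L => //= j L IH; apply: realizes_lift_iter. Qed.

Lemma dpartial_realized g H s : realizes H ->
  dpartial g (H s) = lift (Dmulti (-1) g (enum 'I_n)) H s.
Proof.
move=> hH; rewrite /dpartial; elim: (enum 'I_n) => //= j L IH.
by rewrite IH iter_partial_realized //; apply: realizes_lift_Dmulti.
Qed.

End Realization.

Section SoftmaxFamily.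
Variables (R : realType) (n m : nat) (xi : 'I_m -> 'I_n -> R).
Hypothesis xi_ge0 : forall i k, 0 <= xi i k.
Hypothesis xi_sum : forall i, \sum_(k < n) xi i k = 1.

Local Notation state := (state n m).
Local Notation Dform := (@Dform R n m xi).
Local Notation Dmulti := (@Dmulti R n m xi).

Definition denom (i : 'I_m) (z : 'rV[R]_n) : R := \sum_(k < n) xi i k * expR (z ord0 k).

(* G_(a,b)(z) = exp(<a, z>) / prod_i S_i(z)^(b_i), written through its logarithm. *)
Definition log_G (s : state) (z : 'rV[R]_n) : R :=
  \sum_(j < n) (s.1 j)%:R * z ord0 j - \sum_(i < m) (s.2 i)%:R * ln (denom i z).
Definition G (s : state) (z : 'rV[R]_n) : R := expR (log_G s z).

(* S_i > 0 since xi_i is a nonnegative vector of total mass 1. *)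
Lemma denom_gt0 i z : 0 < denom i z.
Proof.
rewrite lt_def sumr_ge0 ?andbT; last by move=> k _; rewrite mulr_ge0 // expR_ge0.
apply/negP => /eqP/psumr_eq0P H.
have : \sum_(k < n) xi i k = 0.
  apply: big1 => k _.
  have /eqP := H (fun k _ => mulr_ge0 (xi_ge0 i k) (expR_ge0 _)) k isT.
  by rewrite mulf_eq0 (gt_eqF (expR_gt0 _)) orbF => /eqP.
by rewrite xi_sum => /eqP; rewrite oner_eq0.
Qed.

(* Every member of the family equals 1 at the origin, since S_i(0) = 1. *)
Lemma G0 s : G s 0 = 1.
Proof.
rewrite /G /log_G big1 => [|j _]; last by rewrite mxE mulr0.
rewrite big1 ?subr0 ?expR0 // => i _.
have -> : denom i 0 = 1 by rewrite /denom -[RHS](xi_sum i); apply: eq_bigr => k _;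
  rewrite mxE expR0 mulr1.
by rewrite ln1 mulr0.
Qed.

Lemma G_next s z l i : G (next s l i) z = G s z * expR (z ord0 l) / denom i z.
Proof.
rewrite /G /log_G /next /incr_at /=.
under eq_bigr do rewrite natrD mulrDl.
under [X in _ - X]eq_bigr do rewrite natrD mulrDl.
rewrite !big_split /= !sum_delta_l opprD addrACA expRD [expR (z ord0 l - _)]expRB lnK ?mulrA //.
by rewrite posrE; exact: denom_gt0.
Qed.

Lemma denom_derive i z l :
  is_derive z (basis_vec R l) (denom i) (xi i l * expR (z ord0 l)).
Proof.
have := is_derive_lincomb (xi i) (F := fun k (z : 'rV[R]_n) => expR (z ord0 k))
  (fun k => is_derive_comp1 (is_derive_expR _) (is_derive_coord z (basis_vec R l) k)).
move/is_derive_eq; apply.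
by under eq_bigr do rewrite basis_vecE mulrA; rewrite sum_delta_r.
Qed.

Lemma log_G_derive s z l : is_derive z (basis_vec R l) (log_G s)
  ((s.1 l)%:R - \sum_(i < m) (s.2 i)%:R * (xi i l * expR (z ord0 l) / denom i z)).
Proof.
have hlin := is_derive_lincomb (fun j => (s.1 j)%:R)
  (F := fun j (z : 'rV[R]_n) => z ord0 j) (fun j => is_derive_coord z (basis_vec R l) j).
have hlog := is_derive_lincomb (fun i => (s.2 i)%:R) (F := fun i z => ln (denom i z))
  (fun i => is_derive_comp1 (is_derive1_ln (denom_gt0 i z)) (denom_derive i z l)).
move: (is_deriveB hlin hlog) => /is_derive_eq; apply.
under eq_bigr do rewrite basis_vecE; rewrite sum_delta_r.
by congr (_ - _); apply: eq_bigr => i _; rewrite [_^-1 * _]mulrC.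
Qed.

Lemma G_derive s z l :
  is_derive z (basis_vec R l) (G s) (Dform (-1) l (fun s' => G s' z) s).
Proof.
have := is_derive_comp1 (is_derive_expR (log_G s z)) (log_G_derive s z l).
move/is_derive_eq; apply; rewrite -/(G s z).
rewrite /Dform mulN1r mulrBr mulrC; congr (_ - _).
by rewrite mulr_sumr; apply: eq_bigr => i _; rewrite G_next; ring.
Qed.

Lemma G_realizes : realizes xi G.
Proof. move=> s l z; exact: G_derive. Qed.

(* Taylor coefficients of G_s: the formal operators applied to 1 = G_(.)(0). *)
Lemma taylor_coef_G s (g : 'I_n -> nat) :
  taylor_coef (G s) g =
  Dmulti (-1) g (enum 'I_n) (fun _ => 1) s / (\prod_(j < n) (g j)`!)%:R.
Proof.
rewrite /taylor_coef (dpartial_realized _ _ G_realizes) /lift.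
by rewrite (_ : (fun s' => G s' 0) = (fun _ => 1)) //; apply/funext => s'; exact: G0.
Qed.

Lemma taylor_sum_G_le k s a :
  (\sum_(j < n) s.1 j <= a)%N -> (\sum_(i < m) s.2 i <= a)%N ->
  \sum_(gamma : {ffun 'I_n -> 'I_k.+1} | (\sum_(j < n) (gamma j : nat) == k)%N)
    `| taylor_coef (G s) (fun j => gamma j : nat) | <= (2 * a)%:R ^+ k.
Proof.
move=> ha hb.
apply: (le_trans _ (growth_bound_le_pow R k a)).
apply: (le_trans _ (Qsum_le_growth_bound xi_ge0 xi_sum k ha hb)).
apply: ler_sum => g _; rewrite taylor_coef_G normrM normfV normr_nat.
rewrite ler_pM2r ?invr_gt0 ?ltr0n ?prodn_gt0 // => [|j]; last exact: fact_gt0.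
by apply: Dmulti_norm_le => // s'; rewrite normr1.
Qed.

Definition softmax_state (J : 'I_m -> 'I_n) : state :=
  (fun j => (\sum_(i < m) (J i == j))%N, fun _ => 1%N).

Lemma softmax_state_sizes J :
  (\sum_(j < n) (softmax_state J).1 j = m)%N /\ (\sum_(i < m) (softmax_state J).2 i = m)%N.
Proof.
split; last by rewrite /= sum1_card card_ord.
rewrite /= exchange_big /= (eq_bigr (fun _ => 1%N)) ?sum1_card ?card_ord // => i _.
by rewrite (bigD1 (J i)) //= eqxx big1 // => j /negbTE; rewrite eq_sym => ->.
Qed.

Lemma softmax_prod_G J :
  (fun z => \prod_(i < m) softmax_type (J i) (xi i) z) = G (softmax_state J).
Proof.
apply/funext => z; rewrite /G /log_G /softmax_type /=.
under eq_bigr => i _ do rewrite -[X in _ / X](@lnK _ (denom i z)) ?posrE ?denom_gt0 //.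
under eq_bigr do rewrite -expRB.
rewrite -expR_sum sumrB; congr (expR (_ - _)); last first.
  by apply: eq_bigr => i _; rewrite mul1r.
under [RHS]eq_bigr do rewrite natr_sum mulr_suml.
rewrite exchange_big /=; apply: eq_bigr => i _.
by under eq_bigr do rewrite eq_sym; rewrite sum_delta_l.
Qed.

End SoftmaxFamily.

Theorem lemmaB6 (R : realType) (n m : nat) (J : 'I_m -> 'I_n)
  (xi : 'I_m -> 'I_n -> R) :
  (forall i k, 0 <= xi i k) ->
  (forall i, \sum_(k < n) xi i k = 1) ->
  forall k : nat,
    \sum_(gamma : {ffun 'I_n -> 'I_k.+1} | (\sum_(j < n) (gamma j : nat) == k)%N)
       `| taylor_coef (fun z => \prod_(i < m) softmax_type (J i) (xi i) z)
            (fun j => (gamma j : nat)) |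
    <= (expR 3 * m%:R) ^+ k.
Proof.
move=> xi_ge0 xi_sum k.
have [size_a size_b] := softmax_state_sizes J.
rewrite (softmax_prod_G xi_ge0 xi_sum J).
apply: (le_trans (taylor_sum_G_le xi_ge0 xi_sum k (eq_leq size_a) (eq_leq size_b))).
have two_le_e3 : 2 <= expR 3 :> R.
  by apply: le_trans (expR_ge1Dx _); lra.
rewrite natrM lerXn2r ?nnegrE ?mulr_ge0 ?expR_ge0 //.
by rewrite ler_wpM2r.
Qed.
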